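(* Let $(X,d)$ be a compact metric space and $f:X\to X$ continuous. For each $\delta>0$ let $\mathcal D(\delta)=\{D_{i,j}:1\le i\le K,\ 0\le j\le m_i-1\}$ be a family of pairwise disjoint subsets of $CR(f)$ (with $K,m_i$ depending on $\delta$) satisfying: (D1) $CR(f)=\bigsqcup_{i,j}D_{i,j}$ and each $D_{i,j}$ is clopen in $CR(f)$; (D2) setting $D_{i,m_i}=D_{i,0}$, $f(D_{i,j})=D_{i,j+1}$ for all $i,j$; (D3) for any $x,y\in D_{i,j}$ there is $N>0$ such that for every integer $n\ge N$ there is a $\delta$-chain $(x_\eta)_{\eta=0}^k$ of $f$ in $CR(f)$ with $x_0=x$, $x_k=y$ and $k=m_in$. Then for any $x,y\in CR(f)$, $x\sim y$ if and only if for every $\delta>0$, $x$ and $y$ belong to the same member of $\mathcal D(\delta)$.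
   Context: For $\delta>0$, a finite sequence $(x_i)_{i=0}^k$ ($k\ge1$) is a $\delta$-chain of $f$ if $d(f(x_i),x_{i+1})\le\delta$ for $0\le i\le k-1$; it is a $\delta$-cycle if moreover $x_0=x_k$. $CR(f)$ is the set of points $x$ such that for every $\delta>0$ there is a $\delta$-cycle starting and ending at $x$. For $x,y\in CR(f)$, $x\sim y$ iff for every $\delta>0$ there are integers $m>0$, $N>0$ such that for every integer $n\ge N$ there are $\delta$-chains $(x_i)_{i=0}^{mn},(y_i)_{i=0}^{mn}$ of $f$ consisting of points of $CR(f)$ with $x_0=y_{mn}=x$ and $x_{mn}=y_0=y$. (Families satisfying (D1)–(D3) exist for every $\delta>0$.) *)

From Stdlib Require Import Reals List.
Open Scope R_scope.

Record MetricSpace := {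
  pt :> Type;
  dist : pt -> pt -> R;
  dist_nonneg : forall x y, 0 <= dist x y;
  dist_eq0 : forall x y, dist x y = 0 <-> x = y;
  dist_sym : forall x y, dist x y = dist y x;
  dist_tri : forall x y z, dist x z <= dist x y + dist y z
}.

Section Defs.
Variable X : MetricSpace.
Local Notation d := (dist X).

Definition is_open (U : X -> Prop) : Prop :=
  forall x, U x -> exists eps, 0 < eps /\ forall y, d x y < eps -> U y.

Definition compact_space : Prop :=
  forall (I : Type) (U : I -> X -> Prop),
    (forall i, is_open (U i)) -> (forall x, exists i, U i x) ->
    exists l : list I, forall x, exists i, In i l /\ U i x.

Definition continuous (f : X -> X) : Prop :=
  forall x eps, 0 < eps -> exists eta, 0 < eta /\
    forall y, d x y < eta -> d (f x) (f y) < eps.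

Definition is_chain (f : X -> X) (delta : R) (c : nat -> X) (k : nat) : Prop :=
  forall i, (i < k)%nat -> d (f (c i)) (c (S i)) <= delta.

Definition CR (f : X -> X) (x : X) : Prop :=
  forall delta, 0 < delta ->
    exists (c : nat -> X) (k : nat), (1 <= k)%nat /\ is_chain f delta c k /\
      c O = x /\ c k = x.

Definition CR_chain (f : X -> X) (delta : R) (c : nat -> X) (k : nat) : Prop :=
  is_chain f delta c k /\ forall i, (i <= k)%nat -> CR f (c i).

Definition chain_sim (f : X -> X) (x y : X) : Prop :=
  forall delta, 0 < delta ->
    exists m N : nat, (0 < m)%nat /\ (0 < N)%nat /\
      forall n, (N <= n)%nat ->
        exists xs ys : nat -> X,
          CR_chain f delta xs (m * n) /\ CR_chain f delta ys (m * n) /\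
          xs O = x /\ ys (m * n)%nat = x /\ xs (m * n)%nat = y /\ ys O = y.

Definition rel_open (f : X -> X) (D : X -> Prop) : Prop :=
  forall x, D x -> exists eps, 0 < eps /\
    forall y, CR f y -> d x y < eps -> D y.

Definition rel_closed (f : X -> X) (D : X -> Prop) : Prop :=
  forall x, CR f x ->
    (forall eps, 0 < eps -> exists y, D y /\ d x y < eps) -> D x.

(* A family D = {D_{i,j} : 0 <= i < K, 0 <= j < m_i} (indices i shifted
   to start at 0) satisfying (D1)-(D3) for the given delta. *)
Definition good_family (f : X -> X) (delta : R) (K : nat) (m : nat -> nat)
    (D : nat -> nat -> X -> Prop) : Prop :=
  (forall i, (i < K)%nat -> (0 < m i)%nat) /\
  (forall i j x, (i < K)%nat -> (j < m i)%nat -> D i j x -> CR f x) /\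
  (forall i j i' j' x, (i < K)%nat -> (j < m i)%nat ->
     (i' < K)%nat -> (j' < m i')%nat -> (i, j) <> (i', j') ->
     D i j x -> D i' j' x -> False) /\
  (forall x, CR f x -> exists i j, (i < K)%nat /\ (j < m i)%nat /\ D i j x) /\
  (forall i j, (i < K)%nat -> (j < m i)%nat ->
     rel_open f (D i j) /\ rel_closed f (D i j)) /\
  (* (D2) f(D_{i,j}) = D_{i,j+1}, with D_{i,m_i} = D_{i,0} *)
  (forall i j, (i < K)%nat -> (j < m i)%nat ->
     forall z, D i (Nat.modulo (S j) (m i)) z <-> exists w, D i j w /\ f w = z) /\
  (forall i j x y, (i < K)%nat -> (j < m i)%nat -> D i j x -> D i j y ->
     exists N : nat, (0 < N)%nat /\ forall n, (N <= n)%nat ->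
       exists c : nat -> X, CR_chain f delta c (m i * n) /\
         c O = x /\ c (m i * n)%nat = y).

End Defs.

From Pilot Require Import Defs.
From Stdlib Require Import Reals List Lra Lia Classical.
Open Scope R_scope.

(* The backward direction is immediate from (D3): two points of a common
   member D_{i,j} are joined, in both directions, by delta-chains of every
   length m_i n with n large.

   The forward direction rests on two general facts.
   - CR(f) is closed, so by compactness the relatively open cover D(delta)
     of CR(f) has a Lebesgue number eps (Lemma [lebesgue_number]).
   - Consequently a chain in CR(f) with steps smaller than eps cannot jump
     between members: by (D2) it moves from D_{i,j} to D_{i,j+1 mod m_i}
     at each step (Lemma [chain_end_member]).
   Following the chains from x to y and back, of lengths m n and 2 m n,
   then forces x and y into the same member. *)

Section MetricFacts.

Variable X : MetricSpace.
Local Notation d := (Defs.dist X).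

Definition closed_set (S : X -> Prop) : Prop :=
  forall z, (forall eps, 0 < eps -> exists v, S v /\ d z v < eps) -> S z.

Lemma finite_min_pos (I : Type) (g : I -> R) (gpos : forall p, 0 < g p) (l : list I) :
  exists eps, 0 < eps /\ forall p, In p l -> eps <= g p.
Proof.
  induction l as [|p l [eps [Heps Hle]]].
  - exists 1. split; [lra | intros p []].
  - exists (Rmin (g p) eps). split; [apply Rmin_pos; auto|].
    intros q [<-|Hq].
    + apply Rmin_l.
    + eapply Rle_trans; [apply Rmin_r | auto].
Qed.

Lemma lebesgue_number (Xcpt : compact_space X) (S : X -> Prop) (Sclosed : closed_set S)
  (A : Type) (U : A -> X -> Prop)
  (Uopen : forall a x, U a x -> exists eps, 0 < eps /\ forall y, S y -> d x y < eps -> U a y)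
  (Ucover : forall x, S x -> exists a, U a x) :
  exists eps, 0 < eps /\
    forall v w, S v -> S w -> d v w < eps -> exists a, U a v /\ U a w.
Proof.
  set (good := fun z r => forall v w, S v -> S w -> d z v < r -> d z w < r ->
                            exists a, U a v /\ U a w).
  assert (Hgood : forall z, exists r, 0 < r /\ good z r).
  { intro z. destruct (classic (S z)) as [Hz|Hz].
    - destruct (Ucover z Hz) as [a Ha].
      destruct (Uopen a z Ha) as [e [He Hball]].
      exists e. split; [exact He|]. intros v w Hv Hw Hzv Hzw. exists a. auto.
    - (* outside the closed set S, some ball around z misses S *)
      assert (Hfar : ~ forall eps, 0 < eps -> exists v, S v /\ d z v < eps)
        by (intro Hnear; exact (Hz (Sclosed z Hnear))).
      apply not_all_ex_not in Hfar as [e He].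
      apply imply_to_and in He as [Hepos Hnone].
      exists e. split; [exact Hepos|].
      intros v w Hv Hw Hzv _. exfalso. apply Hnone. exists v. auto. }
  set (I := {p : X * R | 0 < snd p /\ good (fst p) (snd p)}).
  set (center := fun p : I => fst (proj1_sig p)).
  set (radius := fun p : I => snd (proj1_sig p)).
  assert (Hradius : forall p, 0 < radius p /\ good (center p) (radius p))
    by (intro p; exact (proj2_sig p)).
  (* cover X by the half balls and extract a finite subcover *)
  destruct (Xcpt I (fun p w => d (center p) w < radius p / 2)) as [l Hl].
  - intros p w Hw. exists (radius p / 2 - d (center p) w). split; [lra|].
    intros y Hy. pose proof (Defs.dist_tri X (center p) w y). lra.
  - intro w. destruct (Hgood w) as [r [Hr Hgr]].
    exists (exist _ (w, r) (conj Hr Hgr)). unfold center, radius; simpl.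
    rewrite (proj2 (Defs.dist_eq0 X w w) eq_refl). lra.
  - destruct (finite_min_pos I (fun p => radius p / 2)) with (l := l)
      as [eps [Heps Hle]]; [intro p; pose proof (proj1 (Hradius p)); lra|].
    exists eps. split; [exact Heps|].
    intros v w Hv Hw Hvw.
    destruct (Hl v) as [p [Hpl Hpv]].
    pose proof (Hle p Hpl).
    pose proof (Defs.dist_tri X (center p) v w).
    apply (proj2 (Hradius p) v w Hv Hw); lra.
Qed.

(* The chain-recurrent set of a continuous map is closed: a delta/3-cycle at
   a nearby point v is rerouted through z. *)
Lemma CR_closed (f : X -> X) (fcont : continuous X f) : closed_set (CR X f).
Proof.
  intros z Hz delta Hd.
  destruct (fcont z (delta/3)) as [eta [Heta Hc]]; [lra|].
  destruct (Hz (Rmin eta (delta/3))) as [v [Hv Hzv]]; [apply Rmin_pos; lra|].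
  assert (Hzv_eta : d z v < eta) by (pose proof (Rmin_l eta (delta/3)); lra).
  assert (Hzv_delta : d z v < delta/3) by (pose proof (Rmin_r eta (delta/3)); lra).
  pose proof (Hc v Hzv_eta) as Hfzv.
  pose proof (Defs.dist_sym X v z) as Hsym.
  destruct (Hv (delta/3)) as [c [k [Hk [Hch [Hc0 Hck]]]]]; [lra|].
  (* replace the two endpoints v of the cycle by z *)
  exists (fun i => if Nat.eqb i 0 then z else if Nat.eqb i k then z else c i), k.
  split; [lia|]. split.
  - intros i Hi. cbv beta.
    replace (Nat.eqb (S i) 0) with false by reflexivity.
    pose proof (Hch i Hi) as Hstep.
    destruct (Nat.eqb_spec i 0) as [Hi0|Hi0];
      destruct (Nat.eqb_spec (S i) k) as [Hik|Hik]; cbv iota.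
    + subst i. rewrite Hc0, Hik, Hck in Hstep.
      pose proof (Defs.dist_tri X (f z) (f v) z). pose proof (Defs.dist_tri X (f v) v z). lra.
    + subst i. rewrite Hc0 in Hstep. pose proof (Defs.dist_tri X (f z) (f v) (c 1%nat)). lra.
    + destruct (Nat.eqb_spec i k); [lia|].
      rewrite Hik, Hck in Hstep. pose proof (Defs.dist_tri X (f (c i)) v z). lra.
    + destruct (Nat.eqb_spec i k); [lia|]. lra.
  - split; [reflexivity|].
    destruct (Nat.eqb_spec k 0); [lia|]. rewrite Nat.eqb_refl. reflexivity.
Qed.

End MetricFacts.

Section CyclicFamily.

Variable X : MetricSpace.
Local Notation d := (Defs.dist X).
Variables (f : X -> X) (delta : R) (K : nat) (m : nat -> nat) (D : nat -> nat -> X -> Prop).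
Hypothesis HD : good_family X f delta K m D.

Definition lebesgue_gap (eps : R) : Prop :=
  forall v w, CR X f v -> CR X f w -> d v w < eps ->
    exists i j, (i < K)%nat /\ (j < m i)%nat /\ D i j v /\ D i j w.

(* Since CR(f) is closed and the members are relatively open, compactness
   provides a Lebesgue number. *)
Lemma family_lebesgue_gap (Xcpt : compact_space X) (fcont : continuous X f) :
  exists eps, 0 < eps /\ lebesgue_gap eps.
Proof.
  destruct HD as (_ & _ & _ & Hcov & Hclo & _).
  destruct (lebesgue_number X Xcpt (CR X f) (CR_closed X f fcont) (nat * nat)
              (fun ij x => (fst ij < K)%nat /\ (snd ij < m (fst ij))%nat /\ D (fst ij) (snd ij) x))
    as [eps [Heps Hgap]].
  - intros [i j] x (Hi & Hj & Hx). simpl in *.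
    destruct (proj1 (Hclo i j Hi Hj) x Hx) as [e [He Hball]].
    exists e. split; [exact He|]. intros y Hy Hxy. auto.
  - intros x Hx. destruct (Hcov x Hx) as (i & j & Hi & Hj & Hij). exists (i, j). auto.
  - exists eps. split; [exact Heps|].
    intros v w Hv Hw Hvw. destruct (Hgap v w Hv Hw Hvw) as [[i j] [(Hi & Hj & Dv) (_ & _ & Dw)]].
    exists i, j. auto.
Qed.

Lemma member_unique i j i' j' z :
  (i < K)%nat -> (j < m i)%nat -> (i' < K)%nat -> (j' < m i')%nat ->
  D i j z -> D i' j' z -> i = i' /\ j = j'.
Proof.
  intros Hi Hj Hi' Hj' Hz Hz'.
  destruct HD as (_ & _ & Hdisj & _).
  destruct (Nat.eq_dec i i') as [Hii|Hii]; destruct (Nat.eq_dec j j') as [Hjj|Hjj].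
  - split; assumption.
  - exfalso. apply (Hdisj i j i' j' z Hi Hj Hi' Hj'); [intros [= _ E]; contradiction | assumption ..].
  - exfalso. apply (Hdisj i j i' j' z Hi Hj Hi' Hj'); [intros [= E _]; contradiction | assumption ..].
  - exfalso. apply (Hdisj i j i' j' z Hi Hj Hi' Hj'); [intros [= E _]; contradiction | assumption ..].
Qed.

Lemma mod_succ_mod (a n : nat) :
  Nat.modulo (S (Nat.modulo a n)) n = Nat.modulo (S a) n.
Proof.
  rewrite <- (Nat.add_1_r (a mod n)), <- (Nat.add_1_r a).
  apply Nat.Div0.add_mod_idemp_l.
Qed.

Lemma chain_end_member eps (Hgap : lebesgue_gap eps) d' (Hd' : d' < eps)
  c L (Hc : CR_chain X f d' c L) i j0 (Hi : (i < K)%nat) (Hj0 : (j0 < m i)%nat)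
  (H0 : D i j0 (c O)) :
  forall k, (k <= L)%nat -> D i (Nat.modulo (j0 + k) (m i)) (c k).
Proof.
  pose proof HD as (Hm & Hsub & _ & _ & _ & HD2 & _).
  destruct Hc as [Hch HcCR].
  pose proof (Hm i Hi) as Hmi.
  induction k as [|k IH]; intros Hk.
  - rewrite Nat.add_0_r, Nat.mod_small; auto.
  - set (j := Nat.modulo (j0 + k) (m i)).
    assert (Hj : (j < m i)%nat) by (apply Nat.mod_upper_bound; lia).
    assert (Hnext : (Nat.modulo (S j) (m i) < m i)%nat) by (apply Nat.mod_upper_bound; lia).
    (* the image f(c k) lies in the next member, and c (k+1) is eps-close to it *)
    assert (Hfc : D i (Nat.modulo (S j) (m i)) (f (c k)))
      by (apply (proj2 (HD2 i j Hi Hj (f (c k)))); exists (c k); auto with arith).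
    destruct (Hgap (f (c k)) (c (S k))) as (i' & j' & Hi' & Hj' & Dfc & Dck).
    + apply (Hsub i _ _ Hi Hnext Hfc).
    + apply HcCR; exact Hk.
    + pose proof (Hch k Hk). lra.
    + destruct (member_unique i _ i' j' _ Hi Hnext Hi' Hj' Hfc Dfc) as [<- <-].
      unfold j in Dck. rewrite mod_succ_mod in Dck.
      rewrite <- Nat.add_succ_r in Dck. exact Dck.
Qed.

Lemma chain_sim_scale_of_member x y i j (Hi : (i < K)%nat) (Hj : (j < m i)%nat)
  (Dx : D i j x) (Dy : D i j y) :
  exists m' N : nat, (0 < m')%nat /\ (0 < N)%nat /\
    forall n, (N <= n)%nat ->
      exists xs ys : nat -> X,
        CR_chain X f delta xs (m' * n) /\ CR_chain X f delta ys (m' * n) /\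
        xs O = x /\ ys (m' * n)%nat = x /\ xs (m' * n)%nat = y /\ ys O = y.
Proof.
  destruct HD as (Hm & _ & _ & _ & _ & _ & HD3).
  destruct (HD3 i j x y Hi Hj Dx Dy) as [N1 [HN1 Cxy]].
  destruct (HD3 i j y x Hi Hj Dy Dx) as [N2 [HN2 Cyx]].
  exists (m i), (Nat.max N1 N2). split; [auto|]. split; [lia|].
  intros n Hn.
  destruct (Cxy n ltac:(lia)) as [xs [Hxs [Hx0 HxL]]].
  destruct (Cyx n ltac:(lia)) as [ys [Hys [Hy0 HyL]]].
  exists xs, ys. exact (conj Hxs (conj Hys (conj Hx0 (conj HyL (conj HxL Hy0))))).
Qed.

(* The chains x -> y of lengths m'N and 2m'N put y in members j + m'N and
   j + 2m'N of the cycle of x, so these agree; the chain y -> x of length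
   m'N then returns to member j + 2m'N = j + m'N, which must be x's member j. *)
Lemma same_member_of_chain_sim (Xcpt : compact_space X) (fcont : continuous X f)
  x y (Hx : CR X f x) (Hsim : chain_sim X f x y) :
  exists i j, (i < K)%nat /\ (j < m i)%nat /\ D i j x /\ D i j y.
Proof.
  destruct family_lebesgue_gap as [eps [Heps Hgap]]; [exact Xcpt | exact fcont |].
  pose proof HD as (Hm & _ & _ & Hcov & _).
  destruct (Hsim (eps/2)) as [m' [N [_ [_ Hch]]]]; [lra|].
  destruct (Hcov x Hx) as (i & j & Hi & Hj & Dx).
  pose proof (Hm i Hi) as Hmi.
  assert (Dy : forall n, (N <= n)%nat -> D i (Nat.modulo (j + m' * n) (m i)) y).
  { intros n Hn. destruct (Hch n Hn) as (xs & ys & Cx & _ & Ex0 & _ & ExL & _).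
    rewrite <- ExL. apply (chain_end_member eps Hgap (eps/2) ltac:(lra) xs _ Cx i j);
      [exact Hi | exact Hj | rewrite Ex0; exact Dx | lia]. }
  set (t := Nat.modulo (j + m' * N) (m i)).
  assert (Ht : (t < m i)%nat) by (apply Nat.mod_upper_bound; lia).
  assert (Ht_twice : t = Nat.modulo (j + m' * (N + N)) (m i)).
  { apply (member_unique i t i _ y Hi Ht Hi);
      [apply Nat.mod_upper_bound; lia | apply Dy; lia | apply Dy; lia]. }
  destruct (Hch N (le_n N)) as (_ & ys & _ & Cy & _ & EyL & _ & Ey0).
  assert (Dx_t : D i (Nat.modulo (t + m' * N) (m i)) x).
  { rewrite <- EyL. apply (chain_end_member eps Hgap (eps/2) ltac:(lra) ys _ Cy i t);
      [exact Hi | exact Ht | rewrite Ey0; apply Dy; lia | lia]. }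
  replace (Nat.modulo (t + m' * N) (m i)) with t in Dx_t.
  2:{ rewrite Ht_twice at 1. unfold t. rewrite Nat.Div0.add_mod_idemp_l.
      f_equal. lia. }
  destruct (member_unique i t i j x Hi Ht Hi Hj Dx_t Dx) as [_ Htj].
  exists i, j. repeat split; [exact Hi | exact Hj | exact Dx |].
  rewrite <- Htj. apply Dy. lia.
Qed.

End CyclicFamily.

Theorem lemma3p2 (X : MetricSpace) (f : X -> X)
  (Xcpt : compact_space X) (fcont : continuous X f)
  (K : R -> nat) (m : R -> nat -> nat) (D : R -> nat -> nat -> X -> Prop)
  (HD : forall delta, 0 < delta -> good_family X f delta (K delta) (m delta) (D delta))
  (x y : X) (Hx : CR X f x) (Hy : CR X f y) :
  chain_sim X f x y <->
  (forall delta, 0 < delta ->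
     exists i j, (i < K delta)%nat /\ (j < m delta i)%nat /\
       D delta i j x /\ D delta i j y).
Proof.
  split.
  - intros Hsim delta Hd.
    exact (same_member_of_chain_sim X f delta _ _ _ (HD delta Hd) Xcpt fcont x y Hx Hsim).
  - intros Hsame delta Hd.
    destruct (Hsame delta Hd) as (i & j & Hi & Hj & Dx & Dy).
    exact (chain_sim_scale_of_member X f delta _ _ _ (HD delta Hd) x y i j Hi Hj Dx Dy).
Qed.
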